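(* Let $G$ be a finite group. The following statements are equivalent: (a) $G$ is abelian; (b) $\mathcal B(G)$ is a Krull monoid; (c) $\mathcal B(G)$ is a transfer Krull monoid.
   Context: Let $G$ be a finite group written multiplicatively with identity $1_G$. $\mathcal F(G)$ denotes the free abelian monoid with basis $G$; its elements are sequences $S=g_1\boldsymbol{\cdot}\ldots\boldsymbol{\cdot}g_\ell$ (unordered, repetitions allowed, operation $\boldsymbol{\cdot}$ = concatenation). $\pi(S)=\{g_{\tau(1)}\cdots g_{\tau(\ell)}:\tau\text{ a permutation of }[1,\ell]\}$, $\pi(\text{empty sequence})=\{1_G\}$, and $\mathcal B(G)=\{S\in\mathcal F(G):1_G\in\pi(S)\}$. All monoids are commutative and cancellative. A monoid homomorphism $\varphi:H\to D$ is a divisor homomorphism if $\varphi(a)\mid\varphi(b)$ implies $a\mid b$. A monoid $H$ is a Krull monoid if there is a divisor homomorphism from $H$ into a free abelian monoid. A monoid homomorphism $\theta:H\to B$ is a transfer homomorphism if (T1) $B=\theta(H)B^\times$ and $\theta^{-1}(B^\times)=H^\times$, and (T2) whenever $u\in H$, $b,c\in B$ and $\theta(u)=bc$, there exist $v,w\in H$ with $u=vw$, $\theta(v)B^\times=bB^\times$ and $\theta(w)B^\times=cB^\times$. A monoid $H$ is a transfer Krull monoid if there exists a transfer homomorphism from $H$ to a Krull monoid. *)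

From Stdlib Require Import List FunctionalExtensionality ProofIrrelevance.
From HB Require Import structures.
From mathcomp Require Import all_boot all_fingroup.
Set Implicit Arguments. Unset Strict Implicit. Unset Printing Implicit Defensive.

Record cmonoid := CMonoid {
  mcar :> Type;
  mop : mcar -> mcar -> mcar;
  mone : mcar;
  mopA : forall a b c, mop a (mop b c) = mop (mop a b) c;
  mopC : forall a b, mop a b = mop b a;
  mop1 : forall a, mop mone a = a;
  mopK : forall a b c, mop a b = mop a c -> b = c
}.

Definition mdvd (H : cmonoid) (a b : H) : Prop := exists c : H, b = mop a c.
Definition munit (H : cmonoid) (a : H) : Prop := exists b : H, mop a b = mone H.
Definition massoc (H : cmonoid) (b c : H) : Prop :=
  exists e : H, munit e /\ b = mop c e.

Definition is_mhom (H D : cmonoid) (phi : H -> D) : Prop :=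
  phi (mone H) = mone D /\ forall a b, phi (mop a b) = mop (phi a) (phi b).

Definition divisor_hom (H D : cmonoid) (phi : H -> D) : Prop :=
  is_mhom phi /\ forall a b, mdvd (phi a) (phi b) -> mdvd a b.

Definition fin_supp (P : Type) (f : P -> nat) : Prop :=
  exists l : list P, forall p, f p <> 0 -> List.In p l.

Definition freeCar (P : Type) := {f : P -> nat | fin_supp f}.

Lemma fin_supp_add (P : Type) (f g : P -> nat) :
  fin_supp f -> fin_supp g -> fin_supp (fun p => f p + g p).
Proof.
move=> [l1 H1] [l2 H2]; exists (l1 ++ l2)%list => p Hp.
apply/List.in_or_app; case: (f p =P 0) => Hf.
  by right; apply: H2; move: Hp; rewrite Hf.
by left; apply: H1.
Qed.

Lemma fin_supp0 (P : Type) : fin_supp (fun _ : P => 0).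
Proof. by exists nil. Qed.

Definition free_op (P : Type) (a b : freeCar P) : freeCar P :=
  exist _ _ (fin_supp_add (proj2_sig a) (proj2_sig b)).
Definition free_one (P : Type) : freeCar P := exist _ _ (@fin_supp0 P).

Lemma free_eq (P : Type) (a b : freeCar P) :
  (forall p, proj1_sig a p = proj1_sig b p) -> a = b.
Proof.
case: a b => [f hf] [g hg] /= E.
have efg : f = g by apply: functional_extensionality.
subst g; by rewrite (proof_irrelevance _ hf hg).
Qed.

Definition freeMon (P : Type) : cmonoid.
Proof.
refine (@CMonoid (freeCar P) (@free_op P) (free_one P) _ _ _ _).
- by move=> a b c; apply: free_eq => p /=; rewrite addnA.
- by move=> a b; apply: free_eq => p /=; rewrite addnC.
- by move=> a; apply: free_eq => p /=.
- move=> a b c E; apply: free_eq => p.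
  have := f_equal (fun x : freeCar P => proj1_sig x p) E => /= /eqP.
  by rewrite eqn_add2l => /eqP.
Defined.

Definition is_Krull (H : cmonoid) : Prop :=
  exists (P : Type) (phi : H -> freeMon P), divisor_hom phi.

Definition is_transfer_hom (H B : cmonoid) (theta : H -> B) : Prop :=
  is_mhom theta /\
  (forall b : B, exists u : H, exists e : B, munit e /\ b = mop (theta u) e) /\
  (forall u : H, munit (theta u) <-> munit u) /\
  (forall (u : H) (b c : B), theta u = mop b c ->
     exists v w : H, u = mop v w /\ massoc (theta v) b /\ massoc (theta w) c).

Definition is_transfer_Krull (H : cmonoid) : Prop :=
  exists (B : cmonoid) (theta : H -> B), is_Krull B /\ is_transfer_hom theta.

Section ZeroSum.
Variable gT : finGroupType.

(* F(G): multiplicity functions G -> nat *)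
Definition seqF := {ffun gT -> nat}.

Definition seq_of (S : seqF) : seq gT :=
  flatten [seq nseq (S g) g | g <- enum gT].

(* 1_G \in pi(S): some ordering of S has product 1 *)
Definition zero_sum (S : seqF) : bool :=
  has (fun s => (\prod_(x <- s) x)%g == 1%g) (permutations (seq_of S)).

Definition addF (S T : seqF) : seqF := [ffun g => S g + T g].
Definition zeroF : seqF := [ffun=> 0].

Lemma seq_of_add S T : perm_eq (seq_of (addF S T)) (seq_of S ++ seq_of T).
Proof.
apply/seq.permP => p; rewrite count_cat /seq_of !count_flatten -!map_comp.
rewrite !sumnE !big_map -big_split /=; apply: eq_bigr => g _.
by rewrite !count_nseq ffunE mulnDr.
Qed.

Lemma zero_sum_add S T : zero_sum S -> zero_sum T -> zero_sum (addF S T).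
Proof.
move=> /hasP [s1 + e1] /hasP [s2 + e2].
rewrite !mem_permutations => p1 p2.
apply/hasP; exists (s1 ++ s2).
  rewrite mem_permutations perm_sym (perm_trans (seq_of_add S T)) //.
  by rewrite perm_sym perm_cat.
by rewrite big_cat /= (eqP e1) (eqP e2) mulg1.
Qed.

Lemma zero_sum0 : zero_sum zeroF.
Proof.
rewrite /zero_sum /seq_of.
have -> : flatten [seq nseq (zeroF g) g | g <- enum gT] = [::].
  by elim: (enum gT) => //= g r ->; rewrite ffunE.
by rewrite /= big_nil eqxx.
Qed.

Definition BCar := {S : seqF | zero_sum S}.

Definition B_op (a b : BCar) : BCar :=
  exist (fun S => zero_sum S) _ (zero_sum_add (proj2_sig a) (proj2_sig b)).
Definition B_one : BCar := exist (fun S => zero_sum S) _ zero_sum0.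

Lemma B_eq (a b : BCar) : (forall g, proj1_sig a g = proj1_sig b g) -> a = b.
Proof.
case: a b => [f hf] [g hg] /= E.
have efg : f = g by apply/ffunP.
subst g; by rewrite (bool_irrelevance hf hg).
Qed.

Definition BG : cmonoid.
Proof.
refine (@CMonoid BCar B_op B_one _ _ _ _).
- by move=> a b c; apply: B_eq => p /=; rewrite !ffunE addnA.
- by move=> a b; apply: B_eq => p /=; rewrite !ffunE addnC.
- by move=> a; apply: B_eq => p /=; rewrite !ffunE.
- move=> a b c E; apply: B_eq => p.
  have := f_equal (fun x : BCar => proj1_sig x p) E => /= /eqP.
  by rewrite !ffunE eqn_add2l => /eqP.
Defined.

End ZeroSum.

From mathcomp Require Import all_boot all_fingroup zify.
Set Implicit Arguments. Unset Strict Implicit. Unset Printing Implicit Defensive.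

(** A Krull monoid is root closed: if [a^n] divides [b^n] with [n > 0], then
    [a] divides [b] (compare exponents in the free abelian monoid). Through a
    transfer homomorphism this yields: whenever [b] is an atom and
    [b^n = a^n c], either [a] or [c] is a unit. If [g] and [h] do not commute,
    put [z = g h^-1 g^-1]; then [b = g.h.g^-1.z] is an atom of [B(G)],
    [a = g.g^-1] and [c = (h.z)^n] with [n] the order of [hz] are non-units,
    and [b^n = a^n c], so [B(G)] is not transfer Krull. Conversely, if [G] is
    abelian, [B(G)] is a saturated submonoid of [F(G)], so the inclusion is a
    divisor homomorphism. *)

Section MonoidPowers.
Variable H : cmonoid.

Definition mpow (n : nat) (a : H) : H := iter n (mop a) (mone H).

Lemma mop1r (a : H) : mop a (mone H) = a.
Proof. by rewrite mopC mop1. Qed.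

Lemma mpowMn n (a b : H) : mpow n (mop a b) = mop (mpow n a) (mpow n b).
Proof.
elim: n => [|n IH] /=; first by rewrite mop1.
rewrite /mpow /= -/(mpow n a) -/(mpow n b) -/(mpow n (mop a b)) IH.
rewrite -!mopA; congr (mop a _); rewrite !mopA; congr (mop _ _); exact: mopC.
Qed.

Lemma munit1 : munit (mone H).
Proof. by exists (mone H); rewrite mop1. Qed.

Lemma munit_mopl (a b : H) : munit (mop a b) -> munit a.
Proof. by case=> c e; exists (mop b c); rewrite mopA. Qed.

Lemma munitM (a b : H) : munit a -> munit b -> munit (mop a b).
Proof.
case=> c ec [d ed]; exists (mop c d).
by rewrite -mopA (mopA b) (mopC b c) -(mopA c) ed mop1r ec.
Qed.

Lemma munit_mpow n (a : H) : munit a -> munit (mpow n a).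
Proof. by move=> ua; elim: n => [|n IH] /=; [exact: munit1 | exact: munitM]. Qed.

End MonoidPowers.

Lemma mhom_mpow (H D : cmonoid) (phi : H -> D) n a :
  is_mhom phi -> phi (mpow n a) = mpow n (phi a).
Proof.
case=> phi1 phiM; elim: n => [|n IH] //=.
by rewrite /mpow /= phiM -/(mpow n a) IH.
Qed.

Lemma free_mpow (P : Type) n (a : freeMon P) p :
  proj1_sig (mpow n a) p = n * proj1_sig a p.
Proof. by elim: n => [|n IH] //=; rewrite /mpow /= -/(mpow n a) IH mulSn. Qed.

Lemma Krull_root_closed (K : cmonoid) n (a b c : K) :
  is_Krull K -> 0 < n -> mpow n b = mop (mpow n a) c -> mdvd a b.
Proof.
move=> [P [phi [phi_hom phi_dvd]]] n_gt0 E; apply: phi_dvd.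
have {}E := f_equal phi E.
rewrite (proj2 phi_hom) !(mhom_mpow _ _ phi_hom) in E.
have le_ab p : proj1_sig (phi a) p <= proj1_sig (phi b) p.
  have := f_equal (fun x : freeMon P => proj1_sig x p) E; rewrite /= !free_mpow.
  by move=> e; rewrite -(leq_pmul2l n_gt0) e leq_addr.
have fs : fin_supp (fun p => proj1_sig (phi b) p - proj1_sig (phi a) p).
  case: (proj2_sig (phi b)) => l hl; exists l => p hp; apply: hl => e.
  by apply: hp; rewrite e.
by exists (exist _ _ fs); apply: free_eq => p /=; rewrite subnKC.
Qed.

Lemma transfer_Krull_atom_pow (H : cmonoid) n (a b c : H) :
  is_transfer_Krull H -> 0 < n ->
  (forall v w, b = mop v w -> munit v \/ munit w) ->
  mpow n b = mop (mpow n a) c -> munit a \/ munit c.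
Proof.
move=> [K [theta [K_Krull [theta_hom [_ [theta_unit T2]]]]]] n_gt0 b_atom E.
have {}E := f_equal theta E.
rewrite (proj2 theta_hom) !(mhom_mpow _ _ theta_hom) in E.
have [k def_b] := Krull_root_closed K_Krull n_gt0 E.
have [v [w [def_vw [[e1 [ue1 def_v]] [e2 [ue2 def_w]]]]]] := T2 _ _ _ def_b.
case: (b_atom _ _ def_vw) => [/theta_unit | /theta_unit].
  by rewrite def_v => /munit_mopl/theta_unit; left.
rewrite def_w => /munit_mopl uk; right; apply/theta_unit.
rewrite def_b mpowMn in E; rewrite -(mopK E); exact: munit_mpow.
Qed.

Lemma transfer_Krull_of_Krull (H : cmonoid) : is_Krull H -> is_transfer_Krull H.
Proof.
have massoc_refl (b : H) : massoc b b by exists (mone H); rewrite mop1r; split; [exact: munit1|].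
move=> H_Krull; exists H, id; do !split => //.
- by move=> b; exists b, (mone H); rewrite mop1r; split; [exact: munit1|].
- by move=> u b c ->; exists b, c; split; [|split; exact: massoc_refl].
Qed.

Lemma perm_cat_mask (T : eqType) (s s1 s2 : seq T) : perm_eq (s1 ++ s2) s ->
  exists2 m, size m = size s &
    perm_eq s1 (mask m s) /\ perm_eq s2 (mask (map negb m) s).
Proof.
elim: s s1 s2 => [|x s IH] s1 s2 hp.
  have := perm_size hp; rewrite size_cat /= => /eqP; rewrite addn_eq0 => /andP[].
  by rewrite !size_eq0 => /eqP-> /eqP->; exists [::].
have : x \in s1 ++ s2 by rewrite (perm_mem hp) mem_head.
rewrite mem_cat => /orP[x_s1|x_s2].
  have : perm_eq (rem x s1 ++ s2) s.
    rewrite -(perm_cons x) -cat_cons; apply: perm_trans _ hp.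
    by rewrite perm_cat2r perm_sym perm_to_rem.
  case/IH => m sm [q1 q2]; exists (true :: m); rewrite /= ?sm //; split => //.
  by rewrite (perm_trans (perm_to_rem x_s1)) // perm_cons.
have : perm_eq (s1 ++ rem x s2) s.
  rewrite -(perm_cons x); apply: perm_trans _ hp.
  by rewrite -cat1s perm_catCA perm_cat2l /= perm_sym perm_to_rem.
case/IH => m sm [q1 q2]; exists (false :: m); rewrite /= ?sm //; split => //.
by rewrite (perm_trans (perm_to_rem x_s2)) // perm_cons.
Qed.

Lemma count_flatten_nseq (T : eqType) n (s : seq T) x :
  count_mem x (flatten (nseq n s)) = n * count_mem x s.
Proof. by elim: n => [|n IH] //=; rewrite count_cat IH mulSn. Qed.

Lemma prod_flatten_nseq (gT : finGroupType) n (s : seq gT) :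
  (\prod_(x <- flatten (nseq n s)) x = (\prod_(x <- s) x) ^+ n)%g.
Proof. by elim: n => [|n IH]; rewrite ?big_nil //= big_cat IH expgS. Qed.

Section ProductOneSequences.
Variable gT : finGroupType.
Local Open Scope group_scope.
Implicit Types (S : seqF gT) (s : seq gT) (v w : BG gT).

Definition seqF_of s : seqF gT := [ffun g => count_mem g s].

Lemma count_seq_of S g : count_mem g (seq_of S) = S g.
Proof.
rewrite /seq_of count_flatten -map_comp sumnE big_map big_enum /=.
rewrite (bigD1 g) //= count_nseq /= eqxx mul1n big1 ?addn0 // => x /negbTE x_g.
by rewrite count_nseq /= x_g.
Qed.

Lemma perm_seq_of_seqF s : perm_eq (seq_of (seqF_of s)) s.
Proof. by apply/allP => x _ /=; rewrite count_seq_of ffunE. Qed.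

Lemma zero_sumP S :
  reflect (exists2 s, perm_eq s (seq_of S) & \prod_(x <- s) x = 1) (zero_sum S).
Proof.
apply: (iffP hasP) => -[s].
  by rewrite mem_permutations => s_S /eqP; exists s.
by move=> s_S prod_s; exists s; rewrite ?mem_permutations ?prod_s.
Qed.

Lemma zero_sum_seqF s : \prod_(x <- s) x = 1 -> zero_sum (seqF_of s).
Proof. by move=> e; apply/zero_sumP; exists s; rewrite // perm_sym perm_seq_of_seqF. Qed.

Definition BG_of s (e : \prod_(x <- s) x = 1) : BG gT :=
  exist (fun S => zero_sum S) _ (zero_sum_seqF e).

Lemma fin_supp_seqF S : fin_supp S.
Proof.
exists (enum gT) => p _; elim: (enum gT) (mem_enum gT p) => [|x r IH] //=.
by rewrite inE => /predU1P[->|/IH]; [left | right].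
Qed.

Definition BG_incl (S : BG gT) : freeMon gT := exist _ _ (fin_supp_seqF (proj1_sig S)).

Lemma BG_unitP v : munit v <-> forall g, proj1_sig v g = 0%N.
Proof.
split=> [[b e] g | v0].
  by have := f_equal (fun x : BG gT => proj1_sig x g) e; rewrite /= !ffunE; lia.
by exists (B_one gT); apply: B_eq => g /=; rewrite !ffunE v0.
Qed.

Lemma BG_mpow n v g : proj1_sig (mpow n v) g = (n * proj1_sig v g)%N.
Proof.
elim: n => [|n IH] /=; first by rewrite ffunE.
by rewrite /mpow /= -/(mpow n v) ffunE IH mulSn.
Qed.

Lemma BG_mop_mask s v w : seqF_of s = addF (proj1_sig v) (proj1_sig w) ->
  exists2 m, size m = size s &
    perm_eq (seq_of (proj1_sig v)) (mask m s) /\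
    perm_eq (seq_of (proj1_sig w)) (mask (map negb m) s).
Proof.
move=> def_s; apply: perm_cat_mask; apply: perm_trans _ (perm_seq_of_seqF s).
by rewrite def_s perm_sym seq_of_add.
Qed.

Lemma BG_unit_seq0 v : perm_eq (seq_of (proj1_sig v)) [::] -> munit v.
Proof.
by move/seq.permP=> v0; apply/BG_unitP => g; rewrite -count_seq_of (v0 (pred1 g)).
Qed.

Lemma zero_sum_seq1 S a : zero_sum S -> perm_eq (seq_of S) [:: a] -> a = 1.
Proof.
case/zero_sumP=> s s_S prod_s S_a.
by move: prod_s; rewrite (perm_small_eq (s2 := [:: a]) isT (perm_trans s_S S_a)) big_seq1.
Qed.

Lemma zero_sum_seq2 S a b : zero_sum S -> perm_eq (seq_of S) [:: a; b] -> a * b = 1.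
Proof.
case/zero_sumP=> s s_S prod_s /(perm_trans s_S) {s_S} s_ab.
have := perm_size s_ab; case: s s_ab prod_s => [|x [|y []]] //= s_ab + _.
rewrite !big_cons big_nil mulg1.
have : x \in [:: a; b] by rewrite -(perm_mem s_ab) mem_head.
rewrite !inE => /orP[] /eqP def_x; subst x.
  by move: s_ab; rewrite perm_cons => /(perm_small_eq (s2 := [:: _]) isT) [->].
have s_ba : perm_eq [:: b; y] [:: b; a] by rewrite (perm_trans s_ab) // (perm_catC [:: a]).
move: s_ba; rewrite perm_cons => /(perm_small_eq (s2 := [:: _]) isT) [->].
by move/eqP; rewrite mulg_eq1 => /eqP->; rewrite mulgV.
Qed.

End ProductOneSequences.

Section NonAbelian.
Variables (gT : finGroupType) (g h : gT).
Local Open Scope group_scope.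
Hypothesis gh_noncomm : ~ commute g h.

Let z := g * h^-1 * g^-1.

Lemma atom_seq_prod : \prod_(x <- [:: g; h; g^-1; z]) x = 1.
Proof. by rewrite /z !big_cons big_nil mulg1 !mulgA mulgKV mulgK mulgV. Qed.

Lemma BG_atom_seq_indecomposable (v w : BG gT) :
  BG_of atom_seq_prod = mop v w -> munit v \/ munit w.
Proof.
have g1 : g <> 1 by move=> g1; apply: gh_noncomm; rewrite g1; exact: commute_sym (commute1 _).
have h1 : h <> 1 by move=> h1; apply: gh_noncomm; rewrite h1; exact: commute1.
have gV1 : g^-1 <> 1 by move/eqP; rewrite invg_eq1 => /eqP.
have z1 : z <> 1.
  move/(congr1 (fun t => g^-1 * t * g)); rewrite /z !mulgA mulVg mul1g mulgKV mulg1 mulVg.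
  by move/eqP; rewrite invg_eq1 => /eqP.
have gh1 : g * h <> 1.
  move/eqP; rewrite mulg_eq1 => /eqP def_g; apply: gh_noncomm; rewrite def_g.
  exact: commute_sym (commuteV (commute_refl h)).
have hz1 : h * z <> 1.
  move/(congr1 (fun t => t * g * h)) => e; apply: gh_noncomm.
  by move: e; rewrite /z !mulgA !mulgKV mul1g.
have hgV1 : h * g^-1 <> 1.
  move/eqP; rewrite divg_eq1 => /eqP def_h; apply: gh_noncomm; rewrite def_h.
  exact: commute_refl.
(* Each of the 16 ways to split the four terms leaves an empty part, or a
   product-one part of one or two terms, which the facts above exclude. *)
move/(f_equal (@proj1_sig _ _)) => /= /BG_mop_mask[m].
case: m => [|b1 [|b2 [|b3 [|b4 []]]]] //= _.
case: b1; case: b2; case: b3; case: b4 => /= -[v_m w_m];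
  try (left; exact: BG_unit_seq0 v_m); try (right; exact: BG_unit_seq0 w_m);
  exfalso;
  try have := zero_sum_seq1 (proj2_sig v) v_m;
  try have := zero_sum_seq1 (proj2_sig w) w_m;
  try have := zero_sum_seq2 (proj2_sig v) v_m;
  try have := zero_sum_seq2 (proj2_sig w) w_m;
  move=> *; match goal with F : ?x <> 1, E : ?x = 1 |- _ => exact: F E end.
Qed.

Lemma inverse_pair_prod : \prod_(x <- [:: g; g^-1]) x = 1.
Proof. by rewrite !big_cons big_nil mulg1 mulgV. Qed.

Lemma order_seq_prod : \prod_(x <- flatten (nseq #[h * z] [:: h; z])) x = 1.
Proof. by rewrite prod_flatten_nseq !big_cons big_nil mulg1 expg_order. Qed.

Lemma BG_atom_seq_mpow :
  mpow #[h * z] (BG_of atom_seq_prod) =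
  mop (mpow #[h * z] (BG_of inverse_pair_prod)) (BG_of order_seq_prod).
Proof.
apply: B_eq => x; rewrite /= !ffunE !BG_mpow /= !ffunE count_flatten_nseq /=.
by rewrite !mulnDr !muln0 !addn0 addnACA !addnA.
Qed.

Lemma noncommuting_not_transfer_Krull : ~ is_transfer_Krull (BG gT).
Proof.
move=> BG_tK.
have [/BG_unitP/(_ g) | /BG_unitP/(_ h)] :=
  transfer_Krull_atom_pow BG_tK (order_gt0 _) BG_atom_seq_indecomposable
    BG_atom_seq_mpow.
  by rewrite /= ffunE /= eqxx.
by rewrite /= ffunE count_flatten_nseq /= eqxx; have := order_gt0 (h * z); lia.
Qed.

End NonAbelian.

Section Abelian.
Variable gT : finGroupType.
Local Open Scope group_scope.
Hypothesis gT_comm : forall x y : gT, commute x y.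

Lemma prod_perm_comm (s t : seq gT) :
  perm_eq s t -> \prod_(x <- s) x = \prod_(x <- t) x.
Proof.
have prod_rem (u : seq gT) (y : gT) : y \in u -> \prod_(x <- u) x = y * \prod_(x <- rem y u) x.
  elim: u => [|x u IH] //=; rewrite inE big_cons.
  have [-> | ne_xy /= u_y] := eqVneq x y; first by [].
  by rewrite big_cons IH // !mulgA (gT_comm x y).
elim: s t => [|y s IH] t s_t; first by move: s_t; rewrite perm_sym => /perm_nilP->.
have t_y : y \in t by rewrite -(perm_mem s_t) mem_head.
rewrite big_cons (prod_rem _ _ t_y) (IH (rem y t)) //.
by rewrite -(perm_cons y) (perm_trans s_t) // perm_to_rem.
Qed.

Lemma zero_sum_comm (S : seqF gT) : zero_sum S = (\prod_(x <- seq_of S) x == 1).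
Proof.
apply/zero_sumP/eqP => [[s s_S prod_s] | prod_S]; last by exists (seq_of S).
by rewrite -(prod_perm_comm s_S).
Qed.

Lemma BG_incl_divisor_hom : divisor_hom (@BG_incl gT).
Proof.
split; first by split => [|a b]; apply: free_eq => p; rewrite /= ffunE.
move=> a b [d def_b]; pose c : seqF gT := [ffun p => proj1_sig d p].
have def_bc : proj1_sig b = addF (proj1_sig a) c.
  apply/ffunP => p; rewrite !ffunE.
  exact: (f_equal (fun x : freeMon gT => proj1_sig x p) def_b).
have c0 : zero_sum c.
  have := proj2_sig b; rewrite !zero_sum_comm def_bc (prod_perm_comm (seq_of_add _ _)).
  by move: (proj2_sig a); rewrite zero_sum_comm big_cat /= => /eqP->; rewrite mul1g.
by exists (exist (fun S => zero_sum S) c c0); apply: B_eq => p; rewrite def_bc.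
Qed.

End Abelian.

Theorem proposition3p4 (gT : finGroupType) :
  (abelian [set: gT] <-> is_Krull (BG gT)) /\
  (is_Krull (BG gT) <-> is_transfer_Krull (BG gT)).
Proof.
have ab_Krull : abelian [set: gT] -> is_Krull (BG gT).
  move/centsP => gT_ab; exists gT, (@BG_incl gT).
  by apply: BG_incl_divisor_hom => x y; apply: gT_ab.
have tK_ab : is_transfer_Krull (BG gT) -> abelian [set: gT].
  move=> BG_tK; apply/centsP => y _ x _.
  have [//|/eqP nc] := eqVneq (x * y)%g (y * x)%g.
  by case: (noncommuting_not_transfer_Krull nc BG_tK).
split; split.
- exact: ab_Krull.
- by move/transfer_Krull_of_Krull/tK_ab.
- exact: transfer_Krull_of_Krull.
- by move/tK_ab/ab_Krull.
Qed.
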